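(* Let $R=\bigoplus_{i\ge0}R_i$ be a graded ring, let $n\ge 3$, and let $s,t\in R_0$ satisfy $sR_0+tR_0=R_0$. Let $\alpha\in \mathrm{GL}_n(R)$ be such that (i) $\alpha\equiv \mathrm{Id}$ modulo the ideal $R_+$, (ii) the image $\alpha_s$ of $\alpha$ in $\mathrm{GL}_n(R_s)$ lies in $\mathrm{E}_n(R_s)$, and (iii) $\alpha_t\in \mathrm{E}_n(R_t)$. Then $\alpha\in\mathrm{E}_n(R)$.
   Context: All rings are commutative Noetherian with $1\neq0$ of finite Krull dimension. A graded ring is $R=\bigoplus_{i\ge0}R_i$ with a non-trivial $\mathbb N$-grading; $R_+=\bigoplus_{i\ge1}R_i$. $\mathrm{E}_n(B)$ denotes the subgroup of $\mathrm{GL}_n(B)$ generated by elementary matrices $\mathrm{Id}+aE_{ij}$, $i\ne j$, $a\in B$. *)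

From HB Require Import structures.
From mathcomp Require Import all_boot all_order all_algebra.
Set Implicit Arguments. Unset Strict Implicit. Unset Printing Implicit Defensive.
Import GRing.Theory.
Local Open Scope ring_scope.

Definition is_ideal (R : comPzRingType) (I : R -> Prop) : Prop :=
  [/\ I 0, (forall x y, I x -> I y -> I (x + y)) & (forall r x, I x -> I (r * x))].

Definition is_prime_ideal (R : comPzRingType) (P : R -> Prop) : Prop :=
  [/\ is_ideal P, ~ P 1 & forall x y, P (x * y) -> P x \/ P y].

Definition noetherian (R : comPzRingType) : Prop :=
  forall I : nat -> R -> Prop, (forall k, is_ideal (I k)) ->
    (forall k x, I k x -> I k.+1 x) ->
    exists N, forall k, (N <= k)%N -> forall x, I k x -> I N x.

Definition finite_krull_dim (R : comPzRingType) : Prop :=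
  exists d : nat, forall P : nat -> R -> Prop,
    (forall k, (k <= d.+1)%N -> is_prime_ideal (P k)) ->
    (forall k, (k <= d)%N ->
       (forall x, P k x -> P k.+1 x) /\ exists x, P k.+1 x /\ ~ P k x) ->
    False.

Record graded_ring (R : comNzRingType) (Rg : nat -> R -> Prop) : Prop := {
  gr_zero : forall i, Rg i 0;
  gr_sub : forall i x y, Rg i x -> Rg i y -> Rg i (x - y);
  gr_mul : forall i j x y, Rg i x -> Rg j y -> Rg (i + j)%N (x * y);
  gr_one : Rg 0%N 1;
  gr_span : forall x, exists (N : nat) (c : nat -> R),
      (forall i, Rg i (c i)) /\ x = \sum_(i < N) c i;
  gr_direct : forall (N : nat) (c : nat -> R), (forall i, Rg i (c i)) ->
      \sum_(i < N) c i = 0 -> forall i, (i < N)%N -> c i = 0;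
  gr_nontrivial : exists (i : nat) (x : R), (0 < i)%N /\ Rg i x /\ x != 0 }.

Definition in_Rplus (R : comNzRingType) (Rg : nat -> R -> Prop) (x : R) : Prop :=
  exists (N : nat) (c : nat -> R), (forall i, Rg i.+1 (c i)) /\ x = \sum_(i < N) c i.

Definition is_localization (R : comNzRingType) (S : comPzRingType)
    (f : {rmorphism R -> S}) (s : R) : Prop :=
  [/\ (exists u : S, f s * u = 1),
      (forall x : R, f x = 0 -> exists k : nat, s ^+ k * x = 0) &
      (forall y : S, exists (x : R) (k : nat), y * f s ^+ k = f x)].

Definition in_GL (B : comPzRingType) (n : nat) (A : 'M[B]_n) : Prop :=
  exists A' : 'M[B]_n, A *m A' = 1%:M /\ A' *m A = 1%:M.

Definition elem_mx (B : comPzRingType) (n : nat) (i j : 'I_n) (a : B) : 'M[B]_n :=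
  1%:M + a *: delta_mx i j.

(* E_n(B): the subgroup of GL_n(B) generated by the elementary matrices.
   Since (Id + a E_ij)^-1 = Id - a E_ij is again elementary, it is the set of
   finite products of elementary matrices. *)
Inductive in_E (B : comPzRingType) (n : nat) : 'M[B]_n -> Prop :=
  | in_E_1 : in_E 1%:M
  | in_E_mul : forall (i j : 'I_n) (a : B) (M : 'M[B]_n),
      i != j -> in_E M -> in_E (elem_mx i j a *m M).

From HB Require Import structures.
From mathcomp Require Import all_boot all_order all_algebra.
From mathcomp Require Import ring zify.
From Stdlib Require Import ClassicalEpsilon.
Set Implicit Arguments. Unset Strict Implicit. Unset Printing Implicit Defensive.
Import GRing.Theory.
Local Open Scope ring_scope.

(* Let theta : R -> R[X] be the ring morphism sum_i x_i |-> sum_i x_i X^i; it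
   satisfies theta(x)(1) = x, and theta(alpha)(0) = Id when alpha = Id mod R_+.
   Applying the dilation principle over R[Y] to theta(alpha)(Y + X)
   theta(alpha^-1)(Y) shows that theta(alpha)(y + s^K b) theta(alpha^-1)(y) is
   elementary, and likewise for t.  Choosing d \in t^K2 R with 1 - d \in s^K1 R
   gives alpha = (alpha theta(alpha^-1)(d)) theta(alpha)(d) \in E_n(R). *)

Section ElementaryRelations.
Variables (B : comPzRingType) (n : nat).
Implicit Types (M : 'M[B]_n) (i j k l p q r : 'I_n) (a b x y : B).

Lemma elem_mulmxE i j a M k l :
  (elem_mx i j a *m M) k l = M k l + (k == i)%:R * a * M j l.
Proof.
rewrite /elem_mx mulmxDl mul1mx -scalemxAl !mxE; congr (_ + _).
rewrite (bigD1 j) //= big1 ?addr0; last first.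
  by move=> m /negbTE mj; rewrite mxE mj andbF mul0r.
by rewrite mxE eqxx andbT mulrA [a * _]mulrC.
Qed.

Lemma elem_mxE i j a k l :
  elem_mx i j a k l = (k == l)%:R + (k == i)%:R * a * (j == l)%:R.
Proof. by rewrite -[elem_mx _ _ _]mulmx1 elem_mulmxE !mxE. Qed.

(* The relations below are identities between entries that become ring
   identities once every comparison of indices is decided. *)
Local Ltac by_index_cases :=
  repeat (match goal with
   | |- context [?u == ?v] => let E := fresh "E" in have [E|E] := eqVneq u v; [subst|]
   end);
  try (match goal with E : is_true (?x != ?x) |- _ => by rewrite eqxx in E end);
  rewrite ?eqxx /=; try ring.

Lemma elem_mx_add i j a b : i != j ->
  elem_mx i j a *m elem_mx i j b = elem_mx i j (a + b).
Proof. by move=> ij; apply/matrixP=> k l; rewrite elem_mulmxE !elem_mxE; by_index_cases. Qed.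

Lemma elem_mx0 i j : elem_mx i j (0 : B) = 1%:M.
Proof. by rewrite /elem_mx scale0r addr0. Qed.

Lemma elem_mxK i j a : i != j -> elem_mx i j a *m elem_mx i j (- a) = 1%:M.
Proof. by move=> ij; rewrite elem_mx_add // subrr elem_mx0. Qed.

Lemma elem_mxNK i j a : i != j -> elem_mx i j (- a) *m elem_mx i j a = 1%:M.
Proof. by move=> ij; rewrite elem_mx_add // addNr elem_mx0. Qed.

Lemma elem_mx_comm p q r l x y : q != r -> l != p ->
  elem_mx p q x *m elem_mx r l y = elem_mx r l y *m elem_mx p q x.
Proof. by move=> qr lp; apply/matrixP=> k m; rewrite !elem_mulmxE !elem_mxE; by_index_cases. Qed.

Lemma elem_conj_row p q l x y : p != q -> q != l -> l != p ->
  elem_mx p q x *m elem_mx q l y *m elem_mx p q (- x) =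
  elem_mx q l y *m elem_mx p l (x * y).
Proof.
move=> pq ql lp; apply/matrixP=> k m; rewrite -!mulmxA !elem_mulmxE !elem_mxE.
by by_index_cases.
Qed.

Lemma elem_conj_col p q r x y : p != q -> r != p -> r != q ->
  elem_mx p q x *m elem_mx r p y *m elem_mx p q (- x) =
  elem_mx r p y *m elem_mx r q (- (x * y)).
Proof.
move=> pq rp rq; apply/matrixP=> k m; rewrite -!mulmxA !elem_mulmxE !elem_mxE.
by by_index_cases.
Qed.

Lemma elem_commutator p q r x y : p != q -> q != r -> r != p ->
  elem_mx q p (x * y) =
  elem_mx q r x *m elem_mx r p y *m elem_mx q r (- x) *m elem_mx r p (- y).
Proof.
move=> pq qr rp; apply/matrixP=> k m; rewrite -!mulmxA !elem_mulmxE !elem_mxE.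
by by_index_cases.
Qed.

End ElementaryRelations.

Lemma third_index n : (3 <= n)%N -> forall p q : 'I_n,
  exists r : 'I_n, (r != p) && (r != q).
Proof.
move=> hn p q.
pose r0 := Ordinal (leq_trans (isT : 0 < 3)%N hn).
pose r1 := Ordinal (leq_trans (isT : 1 < 3)%N hn).
pose r2 := Ordinal hn.
case E0: ((r0 != p) && (r0 != q)); first by exists r0.
case E1: ((r1 != p) && (r1 != q)); first by exists r1.
exists r2; move: E0 E1; rewrite -!val_eqE /=.
by case: (nat_of_ord p) => [|[|?]] //; case: (nat_of_ord q) => [|[|?]].
Qed.

Section ElementaryGroup.
Variables (B : comPzRingType) (n : nat).
Implicit Types (M N : 'M[B]_n).

Lemma in_E_elem (i j : 'I_n) (a : B) : i != j -> in_E (elem_mx i j a).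
Proof. by move=> ij; rewrite -[elem_mx _ _ _]mulmx1; apply: in_E_mul => //; apply: in_E_1. Qed.

Lemma in_E_mulmx M N : in_E M -> in_E N -> in_E (M *m N).
Proof.
elim=> [|i j a M' ij _ IH] hN; first by rewrite mul1mx.
by rewrite -mulmxA; apply: in_E_mul => //; apply: IH.
Qed.

Lemma in_E_inv M : in_E M -> exists2 Mi, in_E Mi & M *m Mi = 1%:M.
Proof.
elim=> [|i j a M' ij _ [Mi hMi hM'Mi]]; first by exists 1%:M; rewrite ?mulmx1 //; apply: in_E_1.
exists (Mi *m elem_mx i j (- a)); first by apply: in_E_mulmx => //; apply: in_E_elem.
by rewrite mulmxA -(mulmxA _ M') hM'Mi mulmx1 elem_mxK.
Qed.

Lemma in_E_left_inverse M N : in_E M -> N *m M = 1%:M -> in_E N.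
Proof.
move=> /in_E_inv [Mi hMi hMMi] hNM.
by rewrite -[N]mulmx1 -hMMi mulmxA hNM mul1mx.
Qed.

Definition elem_conj (p q : 'I_n) (x : B) (X : 'M[B]_n) : 'M[B]_n :=
  elem_mx p q x *m X *m elem_mx p q (- x).

Lemma elem_conj1 (p q : 'I_n) (x : B) : p != q -> elem_conj p q x 1%:M = 1%:M.
Proof. by move=> pq; rewrite /elem_conj mulmx1 elem_mxK. Qed.

Lemma elem_conjM (p q : 'I_n) (x : B) M N : p != q ->
  elem_conj p q x (M *m N) = elem_conj p q x M *m elem_conj p q x N.
Proof.
move=> pq; rewrite /elem_conj !mulmxA -(mulmxA _ (elem_mx p q (- x))).
by rewrite elem_mxNK // mulmx1.
Qed.

End ElementaryGroup.

Section ElementaryMap.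
Variables (B B' : comPzRingType) (n : nat) (h : B -> B').
Hypotheses (h0 : h 0 = 0) (h1 : h 1 = 1) (hD : {morph h : x y / x + y})
  (hM : {morph h : x y / x * y}).

Lemma map_elem_mulmx (i j : 'I_n) (a : B) (M : 'M[B]_n) :
  map_mx h (elem_mx i j a *m M) = elem_mx i j (h a) *m map_mx h M.
Proof.
apply/matrixP=> k l; rewrite mxE !elem_mulmxE !mxE hD !hM.
by case: (k == i); rewrite /= ?h0 ?h1.
Qed.

Lemma map_scalar_mx1 : map_mx h (1%:M : 'M[B]_n) = 1%:M.
Proof. by apply/matrixP=> k l; rewrite !mxE; case: (k == l); rewrite /= ?h0 ?h1. Qed.

Lemma map_elem_mx (i j : 'I_n) (a : B) : map_mx h (elem_mx i j a) = elem_mx i j (h a).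
Proof. by rewrite -[elem_mx i j a]mulmx1 map_elem_mulmx map_scalar_mx1 mulmx1. Qed.

Lemma in_E_map (M : 'M[B]_n) : in_E M -> in_E (map_mx h M).
Proof.
elim=> [|i j a M' ij _ IH]; first by rewrite map_scalar_mx1; apply: in_E_1.
by rewrite map_elem_mulmx; apply: in_E_mul.
Qed.

End ElementaryMap.

Lemma in_E_rmorph (B B' : comPzRingType) (g : {rmorphism B -> B'}) n (M : 'M[B]_n) :
  in_E M -> in_E (map_mx g M).
Proof. by apply: in_E_map; [exact: rmorph0 | exact: rmorph1 | exact: rmorphD | exact: rmorphM]. Qed.

Lemma map_elem_rmorph (B B' : comPzRingType) (g : {rmorphism B -> B'}) n (i j : 'I_n) a :
  map_mx g (elem_mx i j a) = elem_mx i j (g a).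
Proof. by apply: map_elem_mx; [exact: rmorph0 | exact: rmorph1 | exact: rmorphD | exact: rmorphM]. Qed.

Section LocalizationTransfer.
Variables (R : comNzRingType) (S T : comPzRingType) (f : {rmorphism R -> S})
  (g : {rmorphism R -> T}) (s : R) (v : T).
Hypotheses (hloc : is_localization f s) (hv : g s * v = 1).

Lemma inverse_powers_cancel (x : T) (N k l : nat) :
  g s ^+ N * x * g s ^+ l * v ^+ (N + k + l) = x * v ^+ k.
Proof.
have -> : g s ^+ N * x * g s ^+ l * v ^+ (N + k + l) =
    x * v ^+ k * (g s * v) ^+ N * (g s * v) ^+ l by rewrite !exprMn !exprD; ring.
by rewrite hv !expr1n !mulr1.
Qed.

(* The candidate factorisation y = f x / f s^k |-> g x / g s^k is well defined. *)
Lemma localization_factor_wd (x x' : R) (k l : nat) (y : S) :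
  y * f s ^+ k = f x -> y * f s ^+ l = f x' -> g x * v ^+ k = g x' * v ^+ l.
Proof.
case: hloc => _ hker _ e1 e2.
have : f (x * s ^+ l - x' * s ^+ k) = 0.
  by rewrite rmorphB !rmorphM !rmorphXn -e1 -e2 -!mulrA -!exprD addnC subrr.
case/hker=> N /(congr1 g); rewrite rmorph0 rmorphM rmorphB !rmorphM !rmorphXn => e.
have -> : g x * v ^+ k = (g s ^+ N * (g x * g s ^+ l - g x' * g s ^+ k)) * v ^+ (N + k + l)
    + g x' * v ^+ l.
  rewrite mulrBr mulrBl !mulrA inverse_powers_cancel [(N + k + l)%N]addnAC.
  by rewrite inverse_powers_cancel subrK.
by rewrite e mul0r add0r.
Qed.

Let fraction_of (y : S) : exists xk : R * nat, y * f s ^+ xk.2 == f xk.1.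
Proof. by case: hloc => _ _ /(_ y) [x [k e]]; exists (x, k); apply/eqP. Qed.

Let factor (y : S) : T := let xk := xchoose (fraction_of y) in g xk.1 * v ^+ xk.2.

Let factorE y x k : y * f s ^+ k = f x -> factor y = g x * v ^+ k.
Proof. by move=> e; apply: localization_factor_wd e; apply/eqP/(xchooseP (fraction_of y)). Qed.

Lemma localization_factor : exists h : S -> T,
  [/\ h 0 = 0, h 1 = 1, {morph h : x y / x + y}, {morph h : x y / x * y}
    & forall x, h (f x) = g x].
Proof.
exists factor; split.
- by rewrite (@factorE 0 0 0) ?rmorph0 ?mul0r.
- by rewrite (@factorE 1 1 0) ?rmorph1 ?mulr1.
- move=> y1 y2; have /eqP e1 := xchooseP (fraction_of y1).
  have /eqP e2 := xchooseP (fraction_of y2).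
  set a := xchoose (fraction_of y1) in e1 *; set b := xchoose (fraction_of y2) in e2 *.
  rewrite (factorE e1) (factorE e2) (@factorE _ (a.1 * s ^+ b.2 + b.1 * s ^+ a.2) (a.2 + b.2)).
    rewrite rmorphD !rmorphM !rmorphXn mulrDl.
    rewrite -[in g a.1 * v ^+ a.2](inverse_powers_cancel _ 0 a.2 b.2) expr0 mul1r add0n.
    by rewrite -[in g b.1 * v ^+ b.2](inverse_powers_cancel _ 0 b.2 a.2) expr0 mul1r add0n addnC.
  by rewrite rmorphD !rmorphM !rmorphXn -e1 -e2 exprD; ring.
- move=> y1 y2; have /eqP e1 := xchooseP (fraction_of y1).
  have /eqP e2 := xchooseP (fraction_of y2).
  set a := xchoose (fraction_of y1) in e1 *; set b := xchoose (fraction_of y2) in e2 *.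
  rewrite (factorE e1) (factorE e2) (@factorE _ (a.1 * b.1) (a.2 + b.2)).
    by rewrite rmorphM exprD; ring.
  by rewrite rmorphM -e1 -e2 exprD; ring.
- by move=> x; rewrite (@factorE _ x 0) ?mulr1.
Qed.

Lemma in_E_transfer n (M : 'M[R]_n) : in_E (map_mx f M) -> in_E (map_mx g M).
Proof.
have [h [h0 h1 hD hM hf]] := localization_factor.
move=> /(in_E_map h0 h1 hD hM).
by congr in_E; apply/matrixP=> i j; rewrite !mxE hf.
Qed.

End LocalizationTransfer.

(* M becomes elementary over every ring in which s is invertible; by the
   universal property this is equivalent to alpha_s \in E_n(R_s). *)
Definition elementary_away (R : comPzRingType) n (s : R) (M : 'M[R]_n) : Prop :=
  forall (T : comPzRingType) (g : {rmorphism R -> T}) (v : T),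
    g s * v = 1 -> in_E (map_mx g M).

Lemma localization_elementary_away (R : comNzRingType) (S : comPzRingType)
    (f : {rmorphism R -> S}) (s : R) n (M : 'M[R]_n) :
  is_localization f s -> in_E (map_mx f M) -> elementary_away s M.
Proof. by move=> hl hE T g v hv; exact: (in_E_transfer hl hv hE). Qed.

Lemma elementary_away_unit (R : comPzRingType) (u w : R) n (M : 'M[R]_n) :
  elementary_away u M -> u * w = 1 -> in_E M.
Proof. by move=> hM /(hM _ idfun); rewrite map_mx_id. Qed.

Lemma trivial_localization_nilpotent (R : comNzRingType) (S : comPzRingType)
    (f : {rmorphism R -> S}) (s : R) :
  is_localization f s -> (1 : S) = 0 -> exists k, s ^+ k = 0.
Proof.
case=> _ hker _ e; have [k hk] : exists k, s ^+ k * 1 = 0 by apply: hker; rewrite rmorph1 e.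
by exists k; rewrite mulr1 in hk.
Qed.

Lemma comaximal_nilpotent_unit (R : comPzRingType) (s t a b : R) k :
  s * a + t * b = 1 -> s ^+ k = 0 -> exists w, t * w = 1.
Proof.
move=> hab hk; exists (b * \sum_(i < k) (s * a) ^+ i).
have tb : t * b = 1 - s * a by rewrite -hab addrAC subrr add0r.
have := subrX1 (s * a) k; rewrite exprMn hk mul0r sub0r => geom.
by rewrite mulrA tb -opprB mulNr -geom opprK.
Qed.

Lemma comaximal_powers (R : comPzRingType) (s t a b : R) (k l : nat) :
  s * a + t * b = 1 -> exists u v, t ^+ k * u + s ^+ l * v = 1.
Proof.
have pow_left (x y c d : R) m : x * c + y * d = 1 -> exists c' d', x ^+ m * c' + y * d' = 1.
  move=> hxy; elim: m => [|m [c' [d' IH]]]; first by exists 1, 0; rewrite expr0 mulr1 mulr0 addr0.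
  exists (c' * c), (x ^+ m * c' * d + d').
  have -> : x ^+ m.+1 * (c' * c) + y * (x ^+ m * c' * d + d') =
      x ^+ m * c' * (x * c + y * d) + y * d' by rewrite exprS; ring.
  by rewrite hxy mulr1.
move=> hab; have [c [d hl]] := pow_left _ _ _ _ l hab.
have hr : t * d + s ^+ l * c = 1 by rewrite addrC.
have [u [v hk]] := pow_left t (s ^+ l) d c k hr.
by exists u, v.
Qed.

Section PolynomialLocalization.
Variables (R S : comNzRingType) (f : {rmorphism R -> S}) (s : R).
Hypothesis hloc : is_localization f s.

Lemma poly_localization_surj (q : {poly S}) : exists (p : {poly R}) (k : nat),
  q * (f s ^+ k)%:P = map_poly f p.
Proof.
case: hloc => _ _ hs.
have ex i : exists xk : R * nat, q`_i * f s ^+ xk.2 == f xk.1.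
  by have [x [k e]] := hs q`_i; exists (x, k); apply/eqP.
pose xk i := xchoose (ex i).
pose K := \max_(i < size q) (xk i).2.
exists (\poly_(i < size q) ((xk i).1 * s ^+ (K - (xk i).2))), K.
apply/polyP=> j; rewrite coefMC (coef_map_id0 _ _ (rmorph0 f)) coef_poly.
case: ltnP => hj; last by rewrite nth_default // mul0r rmorph0.
have hk : ((xk j).2 <= K)%N by rewrite (leq_bigmax (Ordinal hj)).
have /eqP e := xchooseP (ex j).
by rewrite rmorphM rmorphXn -e -mulrA -exprD subnKC.
Qed.

Lemma poly_localization_ker (p : {poly R}) :
  map_poly f p = 0 -> exists k : nat, (s ^+ k)%:P * p = 0.
Proof.
case: hloc => _ hker _ p0.
have ex i : exists k : nat, s ^+ k * p`_i == 0.
  have [k e] : exists k, s ^+ k * p`_i = 0.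
    by apply: hker; rewrite -(coef_map_id0 _ _ (rmorph0 f)) p0 coef0.
  by exists k; apply/eqP.
pose K := \max_(i < size p) xchoose (ex i).
exists K; apply/polyP=> j; rewrite coefCM coef0.
case: (ltnP j (size p)) => hj; last by rewrite nth_default // mulr0.
have le_jK : (xchoose (ex j) <= K)%N by rewrite (leq_bigmax (Ordinal hj)).
by rewrite -(subnK le_jK) exprD -mulrA (eqP (xchooseP (ex j))) mulr0.
Qed.

Lemma poly_localization :
  is_localization (map_poly f : {rmorphism {poly R} -> {poly S}}) s%:P.
Proof.
case: (hloc) => [[u hu] _ _]; split.
- by exists u%:P; rewrite /= map_polyC -rmorphM /= hu.
- by move=> p /poly_localization_ker [k e]; exists k; rewrite -rmorphXn.
- move=> q; have [p [k e]] := poly_localization_surj q; exists p, k.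
  by rewrite /= map_polyC -rmorphXn.
Qed.

End PolynomialLocalization.

(* A localization whose target is not the zero ring may be regarded as a
   map into a nontrivial ring. *)
Section NontrivialLocalization.
Variables (R : comNzRingType) (S : comPzRingType) (f : {rmorphism R -> S}).
Hypothesis S_nontrivial : (1 : S) != 0.

Definition nontrivial_target : Type := S.
HB.instance Definition _ := GRing.ComPzRing.on nontrivial_target.
HB.instance Definition _ := GRing.PzSemiRing_isNonZero.Build nontrivial_target S_nontrivial.
Definition nontrivial_map : R -> nontrivial_target := f.
HB.instance Definition _ := GRing.RMorphism.on nontrivial_map.

Lemma nontrivial_localization s : is_localization f s ->
  exists (S' : comNzRingType) (f' : {rmorphism R -> S'}), is_localization f' s.
Proof. by move=> hl; exists nontrivial_target, nontrivial_map; exact: hl. Qed.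

End NontrivialLocalization.

Inductive in_E_multiple (A : comNzRingType) (s : A) (n N : nat) : 'M[{poly A}]_n -> Prop :=
  | in_E_multiple_1 : in_E_multiple s N 1%:M
  | in_E_multiple_mul (i j : 'I_n) (r : {poly A}) M : i != j -> in_E_multiple s N M ->
      in_E_multiple s N (elem_mx i j ((s ^+ N)%:P * r) *m M).

Section MultipleElementary.
Variables (A : comNzRingType) (s : A) (n N : nat).
Implicit Types (M : 'M[{poly A}]_n).

Lemma in_E_multiple_mulmx M1 M2 :
  in_E_multiple s N M1 -> in_E_multiple s N M2 -> in_E_multiple s N (M1 *m M2).
Proof.
elim=> [|i j r M ij _ IH] h2; first by rewrite mul1mx.
by rewrite -mulmxA; apply: in_E_multiple_mul => //; apply: IH.
Qed.

Lemma in_E_multiple_in_E M : in_E_multiple s N M -> in_E M.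
Proof. by elim=> [|i j r M0 ij _ IH]; [apply: in_E_1 | apply: in_E_mul]. Qed.

Lemma in_E_multiple_elem (i j : 'I_n) r : i != j ->
  in_E_multiple s N (elem_mx i j ((s ^+ N)%:P * r)).
Proof.
by move=> ij; rewrite -[elem_mx _ _ _]mulmx1; apply: in_E_multiple_mul => //; apply: in_E_multiple_1.
Qed.

End MultipleElementary.

(* The key estimate behind the dilation principle (n >= 3): conjugating by an
   elementary matrix with constant entries over A_s[X] maps the images of
   sufficiently divisible elementary products over A[X] into images of such
   products with any prescribed divisibility s^N. *)
Section ConjugationEstimate.
Variables (A S : comNzRingType) (f : {rmorphism A -> S}) (s : A) (n : nat).
Hypotheses (hloc : is_localization f s) (hn : (3 <= n)%N).

Local Notation P := {poly A}.
Local Notation Q := {poly S}.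
Local Notation F := (map_poly f : {rmorphism P -> Q}).

Definition multiple_image N (W : 'M[Q]_n) :=
  exists2 eps, in_E_multiple s N eps & W = map_mx F eps.

Definition multiple_entry N (w : Q) := exists r : P, w = F ((s ^+ N)%:P * r).

Lemma multiple_image1 N : multiple_image N 1%:M.
Proof. by exists 1%:M; [apply: in_E_multiple_1 | rewrite map_mx1]. Qed.

Lemma multiple_imageM N W1 W2 :
  multiple_image N W1 -> multiple_image N W2 -> multiple_image N (W1 *m W2).
Proof.
move=> [e1 h1 ->] [e2 h2 ->]; exists (e1 *m e2); first exact: in_E_multiple_mulmx.
by rewrite map_mxM.
Qed.

Lemma multiple_image_elem N (i j : 'I_n) w : i != j -> multiple_entry N w ->
  multiple_image N (elem_mx i j w).
Proof.
move=> ij [r ->]; exists (elem_mx i j ((s ^+ N)%:P * r)); first exact: in_E_multiple_elem.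
by rewrite map_elem_rmorph.
Qed.

Lemma multiple_entryN N w : multiple_entry N w -> multiple_entry N (- w).
Proof. by case=> r ->; exists (- r); rewrite mulrN rmorphN. Qed.

Lemma multiple_entry_shift N k r : multiple_entry N (F ((s ^+ (N + k))%:P * r)).
Proof. by exists ((s ^+ k)%:P * r); rewrite exprD polyCM mulrA. Qed.

(* Conjugating e_ab(w) by e_pq(z) when (a, b) <> (q, p): by the Steinberg
   relations the result is a product of elementary matrices with entries
   among +-w and +-zw. *)
Lemma conj_elem_noncommutator N (p q a b : 'I_n) (z : Q) w :
  p != q -> a != b -> ~~ ((a == q) && (b == p)) ->
  multiple_entry N w -> multiple_entry N (z * w) ->
  multiple_image N (elem_conj p q z (elem_mx a b w)).
Proof.
move=> pq ab not_qp hw hzw; rewrite /elem_conj.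
have [aq|aq] := eqVneq a q; have [bp|bp] := eqVneq b p.
- by subst; rewrite !eqxx in not_qp.
- subst a; rewrite elem_conj_row //.
  by apply: multiple_imageM; apply: multiple_image_elem; rewrite // eq_sym.
- subst b; rewrite elem_conj_col //.
  by apply: multiple_imageM; apply: multiple_image_elem => //; apply: multiple_entryN.
- have qa : q != a by rewrite eq_sym.
  rewrite elem_mx_comm // -mulmxA elem_mxK //.
  by rewrite mulmx1; apply: multiple_image_elem.
Qed.

Lemma conj_elem (p q : 'I_n) (z : S) N : p != q -> exists N', forall (a b : 'I_n) (r : P),
  a != b -> multiple_image N (elem_conj p q z%:P (map_mx F (elem_mx a b ((s ^+ N')%:P * r)))).
Proof.
move=> pq; case: (hloc) => [_ _ /(_ z) [x [m zx]]].
pose M := (N + m)%N.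
have zmul r : multiple_entry N (z%:P * F ((s ^+ M)%:P * r)).
  exists (x%:P * r); rewrite !rmorphM /= !map_polyC /= !rmorphXn -zx exprD !polyCM.
  by rewrite (rmorphXn polyC) /=; ring.
have both r : multiple_entry N (F ((s ^+ M)%:P * r)) /\ multiple_entry N (z%:P * F ((s ^+ M)%:P * r)).
  by split; [apply: multiple_entry_shift | apply: zmul].
exists (M + M)%N => a b r ab; rewrite map_elem_rmorph exprD polyCM -mulrA.
have [/andP [/eqP aq /eqP bp]|not_qp] := boolP ((a == q) && (b == p)); last first.
  by apply: conj_elem_noncommutator => //; case: (both ((s ^+ M)%:P * r)).
subst a b; have [l /andP [lp lq]] := third_index hn p q.
have ql : q != l by rewrite eq_sym.
have [w1 zw1] := both 1; have [w2 zw2] := both r; rewrite mulr1 in w1 zw1.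
rewrite rmorphM (elem_commutator _ _ pq ql lp) !elem_conjM //.
apply: multiple_imageM; first apply: multiple_imageM; first apply: multiple_imageM.
all: apply: conj_elem_noncommutator;
  rewrite ?eqxx ?(negbTE lp) ?(negbTE lq) ?andbF ?mulrN //; exact: multiple_entryN.
Qed.

Lemma conj_multiple (p q : 'I_n) (z : S) N : p != q -> exists N',
  forall eps : 'M[P]_n, in_E_multiple s N' eps ->
  multiple_image N (elem_conj p q z%:P (map_mx F eps)).
Proof.
move=> pq; have [N' conjN'] := conj_elem z N pq; exists N'.
move=> eps; elim=> [|i j r M ij _ IH]; first by rewrite map_mx1 elem_conj1 //; apply: multiple_image1.
by rewrite map_mxM elem_conjM //; apply: multiple_imageM => //; apply: conjN'.
Qed.

Lemma conj_constant_multiple (d di : 'M[S]_n) : in_E d -> d *m di = 1%:M ->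
  forall N, exists N', forall eps : 'M[P]_n, in_E_multiple s N' eps ->
  multiple_image N (map_mx polyC d *m map_mx F eps *m map_mx polyC di).
Proof.
move=> hd; elim: hd di => [|i j z d' ij _ IH] di hdi N.
  exists N => eps heps; rewrite mul1mx in hdi.
  by rewrite hdi map_mx1 mul1mx mulmx1; exists eps.
have hd'i : d' *m (di *m elem_mx i j z) = 1%:M.
  have -> : d' *m (di *m elem_mx i j z) =
      elem_mx i j (- z) *m (elem_mx i j z *m d' *m di) *m elem_mx i j z.
    by rewrite !mulmxA elem_mxNK // mul1mx.
  by rewrite hdi mulmx1 elem_mxNK.
have [N1 conjN1] := conj_multiple z N ij; have [N2 conjN2] := IH _ hd'i N1.
exists N2 => eps /conjN2 [eps1 h1 e1].
have -> : di = di *m elem_mx i j z *m elem_mx i j (- z) by rewrite -mulmxA elem_mxK // mulmx1.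
have := conjN1 eps1 h1; rewrite -e1 /elem_conj !map_mxM !map_elem_rmorph rmorphN.
by rewrite !mulmxA.
Qed.

End ConjugationEstimate.

Inductive X_conj_product (S : comNzRingType) (n : nat) : 'M[{poly S}]_n -> Prop :=
  | X_conj_product_1 : X_conj_product 1%:M
  | X_conj_product_mul (d di : 'M[S]_n) (i j : 'I_n) (h : {poly S}) V :
      in_E d -> d *m di = 1%:M -> i != j -> X_conj_product V ->
      X_conj_product (map_mx polyC d *m elem_mx i j ('X * h) *m map_mx polyC di *m V).

Lemma eval_const_mx (B : comNzRingType) (x : B) n (c : 'M[B]_n) :
  map_mx (horner_eval x) (map_mx polyC c) = c.
Proof. by apply/matrixP=> k l; rewrite !mxE horner_evalE hornerC. Qed.

Section PolynomialElementary.
Variables (S : comNzRingType) (n : nat).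
Local Notation Q := {poly S}.
Local Notation C d := (map_mx (polyC : S -> Q) d).

Lemma X_conj_product_conj (d di : 'M[S]_n) (V : 'M[Q]_n) : X_conj_product V ->
  in_E d -> d *m di = 1%:M -> X_conj_product (C d *m V *m C di).
Proof.
move=> hV hd ddi; have didC : C di *m C d = 1%:M by rewrite -map_mxM mulmx1C // map_mx1.
elim: hV => [|d1 di1 i j h V' hd1 d1di1 ij _ IH].
  by rewrite mulmx1 -map_mxM ddi map_mx1; apply: X_conj_product_1.
have -> : C d *m (C d1 *m elem_mx i j ('X * h) *m C di1 *m V') *m C di =
    C (d *m d1) *m elem_mx i j ('X * h) *m C (di1 *m di) *m (C d *m V' *m C di).
  by rewrite !map_mxM !mulmxA -(mulmxA _ (C di) (C d)) didC mulmx1.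
apply: X_conj_product_mul => //; first exact: in_E_mulmx.
by rewrite mulmxA -(mulmxA d) d1di1 mulmx1.
Qed.

Lemma poly_split_constant (g : Q) : g = (g`_0)%:P + 'X * drop_poly 1 g.
Proof.
rewrite -{1}(poly_take_drop 1 g) expr1 mulrC; congr (_ + _).
by apply/polyP=> k; rewrite !coefE; case: k.
Qed.

Lemma elementary_poly_decomposition (W : 'M[Q]_n) : in_E W ->
  exists2 d0, in_E d0 & exists2 V, X_conj_product V & W = V *m C d0.
Proof.
elim=> [|i j g W' ij _ [d0 hd0 [V hV ->]]].
  exists 1%:M; first exact: in_E_1.
  by exists 1%:M; [apply: X_conj_product_1 | rewrite map_mx1 mulmx1].
pose e := elem_mx i j (g`_0); pose e' := elem_mx i j (- g`_0).
exists (e *m d0); first by apply: in_E_mulmx => //; apply: in_E_elem.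
have ee' : e *m e' = 1%:M by exact: elem_mxK.
exists (C e *m elem_mx i j ('X * drop_poly 1 g) *m C e' *m (C e *m V *m C e')).
  by apply: X_conj_product_mul => //; [apply: in_E_elem | apply: X_conj_product_conj => //; apply: in_E_elem].
have e'e : C e' *m C e = 1%:M by rewrite -map_mxM elem_mxNK // map_mx1.
rewrite map_mxM !mulmxA -!(mulmxA _ (C e') (C e)) e'e !mulmx1.
by rewrite map_elem_rmorph elem_mx_add // -poly_split_constant.
Qed.

Lemma X_conj_product_eval0 (V : 'M[Q]_n) :
  X_conj_product V -> map_mx (horner_eval (0 : S)) V = 1%:M.
Proof.
elim=> [|d di i j h V' hd ddi ij _ IH]; first by rewrite map_mx1.
rewrite !map_mxM !eval_const_mx IH mulmx1 map_elem_rmorph /= horner_evalE.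
by rewrite hornerM hornerX mul0r elem_mx0 mulmx1.
Qed.

End PolynomialElementary.

Lemma torsion_eval (A : comNzRingType) (s : A) (p : {poly A}) (m : nat) (x : A) :
  p`_0 = 0 -> (s ^+ m)%:P * p = 0 -> p.[s ^+ m * x] = 0.
Proof.
move=> p0 e; rewrite horner_coef big1 // => [[[|i] hi]] _ /=; first by rewrite p0 mul0r.
have e1 : s ^+ m * p`_i.+1 = 0 by rewrite -coefCM e coef0.
have -> : p`_i.+1 * (s ^+ m * x) ^+ i.+1 = (s ^+ m * p`_i.+1) * (x * (s ^+ m * x) ^+ i).
  by rewrite exprS; ring.
by rewrite e1 mul0r.
Qed.

Section Dilation.
Variables (A S : comNzRingType) (f : {rmorphism A -> S}) (s : A) (n : nat).
Hypotheses (hloc : is_localization f s) (hn : (3 <= n)%N).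

Local Notation P := {poly A}.
Local Notation Q := {poly S}.
Local Notation F := (map_poly f : {rmorphism P -> Q}).

(* Substituting (f s)^K X into X h gives the image of a multiple of s^N'
   as soon as K >= N' + m, where s^m clears the denominators of h. *)
Lemma dilate_X_multiple (K N' m : nat) (h : Q) (ph : P) : (N' + m <= K)%N ->
  h * (f s ^+ m)%:P = F ph ->
  ('X * h) \Po ((f s ^+ K)%:P * 'X) =
  F ((s ^+ N')%:P * ((s ^+ (K - N' - m))%:P * 'X * (ph \Po ((s ^+ K)%:P * 'X)))).
Proof.
move=> hK e.
have e2 : (h \Po ((f s ^+ K)%:P * 'X)) * (f s ^+ m)%:P = F (ph \Po ((s ^+ K)%:P * 'X)).
  rewrite /= map_comp_poly -e comp_polyM comp_polyC rmorphM /= map_polyC map_polyX /=.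
  by rewrite (rmorphXn f).
rewrite comp_polyM comp_polyX !rmorphM /= -e2 !map_polyC map_polyX /= !(rmorphXn f).
have -> : f s ^+ K = f s ^+ N' * f s ^+ (K - N' - m) * f s ^+ m.
  by rewrite -!exprD; congr (_ ^+ _); lia.
rewrite !polyCM; ring.
Qed.

Lemma X_conj_product_dilation (V : 'M[Q]_n) : X_conj_product V ->
  exists K0, forall K, (K0 <= K)%N -> exists2 eps : 'M[P]_n,
  in_E eps & map_mx (comp_poly ((f s ^+ K)%:P * 'X)) V = map_mx F eps.
Proof.
elim=> [|d di i j h V' hd ddi ij _ [K1 IH]].
  by exists 0%N => K _; exists 1%:M; rewrite ?map_mx1 //; apply: in_E_1.
have [N' conjN'] := conj_constant_multiple hloc hn hd ddi 0.
have [ph [m em]] := poly_localization_surj hloc h.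
exists (K1 + (N' + m))%N => K hK.
have [eps1 he1 ee1] := IH K (leq_trans (leq_addr _ _) hK).
set r := (s ^+ (K - N' - m))%:P * 'X * (ph \Po ((s ^+ K)%:P * 'X)).
have [eps2 g2 ee2] := conjN' _ (in_E_multiple_elem s N' r ij).
exists (eps2 *m eps1); first by apply: in_E_mulmx => //; apply: in_E_multiple_in_E g2.
have dil_const (c : 'M[S]_n) :
    map_mx (comp_poly ((f s ^+ K)%:P * 'X)) (map_mx polyC c) = map_mx polyC c.
  by apply/matrixP=> k l; rewrite !mxE /= comp_polyC.
rewrite !(map_mxM (comp_poly ((f s ^+ K)%:P * 'X))) !dil_const ee1 (map_mxM F) -ee2.
rewrite !map_elem_rmorph /r -(dilate_X_multiple _ em) //.
by apply: leq_trans hK; apply: leq_addl.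
Qed.

Local Notation dilate K := (comp_poly ((s ^+ K)%:P * 'X) : P -> P).

Lemma eval0_map_poly (M : 'M[P]_n) :
  map_mx (horner_eval 0) (map_mx F M) = map_mx f (map_mx (horner_eval 0) M).
Proof.
by apply/matrixP=> i j; rewrite !mxE !horner_evalE /= -(rmorph0 f) horner_map.
Qed.

Lemma eval0_dilate K (M : 'M[P]_n) :
  map_mx (horner_eval 0) (map_mx (dilate K) M) = map_mx (horner_eval 0) M.
Proof.
by apply/matrixP=> i j; rewrite !mxE !horner_evalE horner_comp hornerCM hornerX mulr0.
Qed.

Lemma map_poly_dilate K (M : 'M[P]_n) :
  map_mx F (map_mx (dilate K) M) = map_mx (comp_poly ((f s ^+ K)%:P * 'X)) (map_mx F M).
Proof.
apply/matrixP=> i j; rewrite !mxE /= map_comp_poly rmorphM /= map_polyC map_polyX /=.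
by rewrite rmorphXn.
Qed.

Lemma dilation_lift (g : 'M[P]_n) : map_mx (horner_eval 0) g = 1%:M ->
  in_E (map_mx F g) -> exists K, exists2 eps, in_E eps &
  map_mx F eps = map_mx F (map_mx (dilate K) g) /\ map_mx (horner_eval 0) eps = 1%:M.
Proof.
move=> g0 hE; have [d0 hd0 [V hV eW]] := elementary_poly_decomposition hE.
have d01 : d0 = 1%:M.
  have := congr1 (map_mx (horner_eval 0)) eW.
  by rewrite eval0_map_poly g0 map_mx1 map_mxM (X_conj_product_eval0 hV) mul1mx eval_const_mx.
rewrite d01 map_mx1 mulmx1 in eW.
have [K HK] := X_conj_product_dilation hV; have [eps heps eeps] := HK K (leqnn _).
have F_eps : map_mx F eps = map_mx F (map_mx (dilate K) g) by rewrite map_poly_dilate eW eeps.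
pose e0 := map_mx (horner_eval (0 : A)) eps.
have [e0i he0i e0e0i] := in_E_inv (in_E_rmorph (horner_eval 0) heps : in_E e0).
have f_e0 : map_mx f e0 = 1%:M by rewrite -eval0_map_poly F_eps eval0_map_poly eval0_dilate g0 map_mx1.
have f_e0i : map_mx f e0i = 1%:M.
  by have := congr1 (map_mx f) e0e0i; rewrite map_mxM f_e0 mul1mx map_mx1.
exists K, (eps *m map_mx polyC e0i).
  by apply: in_E_mulmx => //; apply: in_E_rmorph.
split; last by rewrite (map_mxM (horner_eval (0 : A))) eval_const_mx.
rewrite map_mxM -F_eps.
have -> : map_mx F (map_mx polyC e0i) = map_mx polyC (map_mx f e0i).
  by apply/matrixP=> i j; rewrite !mxE /= map_polyC.
by rewrite f_e0i map_mx1 mulmx1.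
Qed.

Lemma dilations_agree (G H : 'M[P]_n) :
  map_mx F G = map_mx F H -> map_mx (horner_eval 0) G = map_mx (horner_eval 0) H ->
  exists m, forall b, map_mx (horner_eval (s ^+ m * b)) G = map_mx (horner_eval (s ^+ m * b)) H.
Proof.
move=> FGH GH0.
have tors i j : exists k, (s ^+ k)%:P * (G i j - H i j) = 0.
  apply: (poly_localization_ker hloc).
  by rewrite rmorphB /=; move/matrixP: FGH => /(_ i j); rewrite !mxE => ->; rewrite subrr.
have [k hk] := @fin_all_exists _ (fun _ => nat) _ (fun ij : 'I_n * 'I_n => tors ij.1 ij.2).
pose m := (\max_(ij : 'I_n * 'I_n) k ij)%N.
exists m => b; apply/matrixP=> i j; rewrite !mxE.
rewrite !horner_evalE; apply/eqP; rewrite -subr_eq0 -hornerN -hornerD; apply/eqP.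
apply: torsion_eval.
  move/matrixP: GH0 => /(_ i j); rewrite !mxE !horner_evalE => GH0.
  by rewrite -horner_coef0 hornerD hornerN GH0 subrr.
have le_k : (k (i, j) <= m)%N by apply: (leq_bigmax (i, j)).
by rewrite -(subnK le_k) exprD polyCM -mulrA hk mulr0.
Qed.

Theorem dilation_principle (g : 'M[P]_n) : map_mx (horner_eval 0) g = 1%:M ->
  in_E (map_mx F g) -> exists K, forall b : A, in_E (map_mx (horner_eval (s ^+ K * b)) g).
Proof.
move=> g0 hE; have [K [eps heps [F_eps eps0]]] := dilation_lift g0 hE.
have same0 : map_mx (horner_eval 0) eps = map_mx (horner_eval 0) (map_mx (dilate K) g).
  by rewrite eps0 eval0_dilate g0.
have [m agree] := dilations_agree F_eps same0.
exists (K + m)%N => b; have := in_E_rmorph (horner_eval (s ^+ m * b)) heps.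
rewrite agree; congr in_E; apply/matrixP=> i j; rewrite !mxE !horner_evalE horner_comp.
by rewrite hornerCM hornerX exprD mulrA.
Qed.

End Dilation.

Section GradedRing.
Variables (R : comNzRingType) (Rg : nat -> R -> Prop) (hgr : graded_ring Rg).

Lemma graded0 i : Rg i 0.
Proof. exact: gr_zero. Qed.

Lemma gradedN i x : Rg i x -> Rg i (- x).
Proof. by move=> h; rewrite -sub0r; apply: (gr_sub hgr) => //; apply: graded0. Qed.

Lemma gradedD i x y : Rg i x -> Rg i y -> Rg i (x + y).
Proof. by move=> h1 h2; rewrite -[y]opprK; apply: (gr_sub hgr) => //; apply: gradedN. Qed.

Lemma graded_sum (I : Type) (r : seq I) (P : pred I) (F : I -> R) i :
  (forall l, P l -> Rg i (F l)) -> Rg i (\sum_(l <- r | P l) F l).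
Proof. by move=> h; apply: big_ind => //; [apply: graded0 | apply: gradedD]. Qed.

Let decomposition_exists x : exists Nc : nat * (nat -> R),
  (forall i, Rg i (Nc.2 i)) /\ x = \sum_(i < Nc.1) Nc.2 i.
Proof. by have [N [c [h1 h2]]] := gr_span hgr x; exists (N, c). Qed.

Definition hdecomp x :=
  proj1_sig (constructive_indefinite_description _ (decomposition_exists x)).

Lemma hdecompP x :
  (forall i, Rg i ((hdecomp x).2 i)) /\ x = \sum_(i < (hdecomp x).1) (hdecomp x).2 i.
Proof. exact: (proj2_sig (constructive_indefinite_description _ (decomposition_exists x))). Qed.

Definition hcomp (k : nat) (x : R) : R := if (k < (hdecomp x).1)%N then (hdecomp x).2 k else 0.

Lemma sum_ord_pad (c : nat -> R) N L : (N <= L)%N ->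
  \sum_(i < N) c i = \sum_(i < L) (if (i < N)%N then c i else 0).
Proof. by move=> h; rewrite (big_ord_widen L c h) big_mkcond. Qed.

(* By directness of the sum, any homogeneous decomposition gives the components. *)
Lemma hcomp_unique x (d : nat -> R) M : (forall i, Rg i (d i)) -> x = \sum_(i < M) d i ->
  forall k, hcomp k x = if (k < M)%N then d k else 0.
Proof.
move=> hd ex k; have [hc ec] := hdecompP x.
set N := (hdecomp x).1 in ec *; set c := (hdecomp x).2 in hc ec *.
pose L := maxn N M.
pose e i := (if (i < N)%N then c i else 0) - (if (i < M)%N then d i else 0).
have he i : Rg i (e i).
  by apply: (gr_sub hgr); case: ifP => _ //; apply: graded0.
have se : \sum_(i < L) e i = 0.
  by rewrite sumrB -sum_ord_pad ?leq_maxl // -sum_ord_pad ?leq_maxr // -ec -ex subrr.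
rewrite /hcomp -/N -/c; case: (ltnP k L) => hk.
  by apply/eqP; rewrite -subr_eq0; apply/eqP; apply: (gr_direct hgr he se).
by rewrite !ltnNge (leq_trans (leq_maxl _ _) hk) (leq_trans (leq_maxr _ _) hk).
Qed.

Lemma hcomp_graded k x : Rg k (hcomp k x).
Proof. by rewrite /hcomp; case: ifP => _; [apply: (hdecompP x).1 | apply: graded0]. Qed.

Lemma hcomp_ge k x : ((hdecomp x).1 <= k)%N -> hcomp k x = 0.
Proof. by rewrite /hcomp ltnNge => ->. Qed.

Lemma hcomp_sum x L : ((hdecomp x).1 <= L)%N -> x = \sum_(i < L) hcomp i x.
Proof. by move=> h; rewrite {1}(hdecompP x).2 (sum_ord_pad _ h). Qed.

Lemma hcompD k x y : hcomp k (x + y) = hcomp k x + hcomp k y.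
Proof.
pose L := maxn (hdecomp x).1 (hdecomp y).1.
have e : x + y = \sum_(i < L) (hcomp i x + hcomp i y).
  by rewrite big_split /= -!hcomp_sum // ?leq_maxl ?leq_maxr.
rewrite (hcomp_unique (d := fun i => hcomp i x + hcomp i y) _ e); last first.
  by move=> i; apply: gradedD; apply: hcomp_graded.
case: ltnP => // hk.
by rewrite !hcomp_ge ?addr0 //; apply: leq_trans hk; [apply: leq_maxr | apply: leq_maxl].
Qed.

Lemma hcomp0 k : hcomp k 0 = 0.
Proof. by rewrite (hcomp_unique (d := fun _ => 0) (M := 0)) ?big_ord0 //; move=> i; apply: graded0. Qed.

Lemma hcompN k x : hcomp k (- x) = - hcomp k x.
Proof. by apply/eqP; rewrite -subr_eq0 opprK -hcompD addNr hcomp0. Qed.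

Lemma hcomp_deg0 k x : Rg 0 x -> hcomp k x = if k == 0%N then x else 0.
Proof.
move=> h; rewrite (hcomp_unique (d := fun i => if i == 0%N then x else 0) (M := 1)).
- by case: k.
- by case=> [|i] //=; apply: graded0.
- by rewrite big_ord1.
Qed.

Lemma hcomp_family (I : finType) (e : I -> R) (deg : I -> nat) :
  (forall l, Rg (deg l) (e l)) -> forall k,
  hcomp k (\sum_l e l) = \sum_(l | deg l == k) e l.
Proof.
move=> he k; pose m := \max_l deg l.
have hdeg l : (deg l < m.+1)%N by rewrite ltnS (leq_bigmax l).
pose g j := \sum_(l | deg l == j) e l.
have hg j : Rg j (g j) by apply: graded_sum => l /eqP <-.
have es : \sum_l e l = \sum_(j < m.+1) g j.
  rewrite (partition_big (fun l => (inord (deg l) : 'I_m.+1)) xpredT) //=.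
  by apply: eq_bigr => j _; apply: eq_bigl => l; rewrite -val_eqE /= inordK.
rewrite (hcomp_unique hg es); case: ltnP => // hk.
rewrite /g big_pred0 // => l; apply/negbTE; rewrite neq_ltn.
by rewrite (leq_trans (hdeg l) hk).
Qed.

Definition Theta (x : R) : {poly R} := \poly_(i < (hdecomp x).1) hcomp i x.

Lemma coef_Theta x k : (Theta x)`_k = hcomp k x.
Proof. by rewrite coef_poly; case: ltnP => // h; rewrite hcomp_ge. Qed.

Lemma ThetaE x L : ((hdecomp x).1 <= L)%N -> Theta x = \sum_(i < L) hcomp i x *: 'X^i.
Proof.
move=> h; apply/polyP=> k; rewrite coef_Theta coef_sumMXn.
case: (ltnP k L) => hk.
  by rewrite (big_pred1 (Ordinal hk)) // => i /=; rewrite -val_eqE.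
rewrite big_pred0; first by rewrite hcomp_ge // (leq_trans h hk).
by move=> i /=; apply/negbTE; rewrite neq_ltn (leq_trans (ltn_ord i) hk).
Qed.

Lemma Theta_zmod : zmod_morphism Theta.
Proof. by move=> x y; apply/polyP=> k; rewrite coefB !coef_Theta hcompD hcompN. Qed.

Lemma Theta_deg0 x : Rg 0 x -> Theta x = x%:P.
Proof. by move=> h; apply/polyP=> k; rewrite coef_Theta coefC hcomp_deg0. Qed.

(* Multiplicativity is where R_i R_j \subset R_(i+j) is used. *)
Lemma ThetaM x y : Theta (x * y) = Theta x * Theta y.
Proof.
pose L := maxn (hdecomp x).1 (hdecomp y).1.
have hx : ((hdecomp x).1 <= L)%N by apply: leq_maxl.
have hy : ((hdecomp y).1 <= L)%N by apply: leq_maxr.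
rewrite (ThetaE hx) (ThetaE hy) big_distrlr /= pair_bigA /=.
have exy : x * y = \sum_(p : 'I_L * 'I_L) hcomp p.1 x * hcomp p.2 y.
  rewrite {1}(hcomp_sum hx) {1}(hcomp_sum hy) big_distrlr /= pair_bigA /=.
  by apply: eq_bigr.
apply/polyP=> k; rewrite coef_Theta exy.
rewrite (hcomp_family (deg := fun p : 'I_L * 'I_L => (p.1 + p.2)%N)); last first.
  by move=> [i j] /=; apply: (gr_mul hgr); apply: hcomp_graded.
rewrite (eq_bigr (fun p : 'I_L * 'I_L => (hcomp p.1 x * hcomp p.2 y) *: 'X^(p.1 + p.2))).
  by rewrite coef_sumMXn.
by move=> [i j] _ /=; rewrite -scalerAl -scalerAr scalerA -exprD.
Qed.

Lemma Theta_monoid : monoid_morphism Theta.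
Proof. by split; [exact: Theta_deg0 (gr_one hgr) | exact: ThetaM]. Qed.

HB.instance Definition _ := GRing.isZmodMorphism.Build R {poly R} Theta Theta_zmod.
HB.instance Definition _ := GRing.isMonoidMorphism.Build R {poly R} Theta Theta_monoid.

Lemma Theta_at1 x : (Theta x).[1] = x.
Proof.
rewrite (ThetaE (leqnn _)) [RHS](hcomp_sum (leqnn ((hdecomp x).1))) horner_sum.
by apply: eq_bigr => i _; rewrite hornerZ hornerXn expr1n mulr1.
Qed.

Lemma Theta_eval0_Rplus n (M : 'M[R]_n) : (forall i j, in_Rplus Rg ((M - 1%:M) i j)) ->
  map_mx (horner_eval 0) (map_mx Theta M) = 1%:M.
Proof.
move=> hM; apply/matrixP=> i j; rewrite !mxE horner_evalE horner_coef0 coef_Theta.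
have [N [c [hc eMij]]] := hM i j.
pose d k := if k is k'.+1 then c k' else 0.
have hd k : Rg k (d k) by case: k => [|k] /=; [apply: graded0 | apply: hc].
have e : (M - 1%:M) i j = \sum_(k < N.+1) d k.
  by rewrite big_ord_recl /= add0r.
have := hcomp_unique hd e 0.
rewrite !mxE /= hcompD hcompN (hcomp_deg0 _ (x := (i == j)%:R)) /=.
  by move/eqP; rewrite subr_eq0 => /eqP.
by case: (i == j); [exact: (gr_one hgr) | exact: graded0].
Qed.

End GradedRing.

Section GradedPatching.
Variables (R : comNzRingType) (Rg : nat -> R -> Prop) (hgr : graded_ring Rg).
Variables (n : nat) (hn : (3 <= n)%N) (alpha alpha' : 'M[R]_n).
Hypotheses (alpha_inv : alpha *m alpha' = 1%:M)
  (alpha0 : map_mx (horner_eval 0) (map_mx (Theta hgr) alpha) = 1%:M).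

Local Notation theta := (Theta hgr).
Local Notation theta_at y M := (map_mx (fun x => (theta x).[y]) M).

Lemma theta_atE y (M : 'M[R]_n) : theta_at y M = map_mx (horner_eval y) (map_mx theta M).
Proof. by apply/matrixP=> i j; rewrite !mxE horner_evalE. Qed.

Lemma theta_at_inv y : theta_at y alpha' *m theta_at y alpha = 1%:M.
Proof. by rewrite !theta_atE -!map_mxM mulmx1C // !map_mx1. Qed.

Lemma theta_at0_inv : theta_at 0 alpha' = 1%:M.
Proof.
have := congr1 (map_mx (horner_eval 0) \o map_mx theta) alpha_inv.
by rewrite /= !map_mxM alpha0 mul1mx -theta_atE !map_mx1.
Qed.

(* This is the dilation principle over R[Y]
   applied to theta(alpha)(Y + X) theta(alpha^-1)(Y), which is Id at X = 0. *)
Lemma graded_local_factor (s : R) (hs : Rg 0 s) (S : comNzRingType)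
    (f : {rmorphism R -> S}) (hloc : is_localization f s) :
  elementary_away s alpha ->
  exists K, forall b y, in_E (theta_at (y + s ^+ K * b) alpha *m theta_at y alpha').
Proof.
move=> hE; have [[u hu] _ _] := hloc.
pose shift := (comp_poly ('X%:P + 'X) \o map_poly polyC \o theta
  : {rmorphism R -> {poly {poly R}}}).
pose beta := map_mx shift alpha *m map_mx polyC (map_mx theta alpha').
have beta0 : map_mx (horner_eval 0) beta = 1%:M.
  rewrite map_mxM eval_const_mx.
  have -> : map_mx (horner_eval 0) (map_mx shift alpha) = map_mx theta alpha.
    apply/matrixP=> i j; rewrite !mxE horner_evalE /= horner_comp.
    by rewrite hornerD hornerC hornerX addr0; apply: comp_polyXr.
  by rewrite -map_mxM alpha_inv map_mx1.
have theta_s : theta s = s%:P by apply: Theta_deg0.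
have hE' : in_E (map_mx (map_poly f \o theta) alpha').
  apply: (in_E_left_inverse (M := map_mx (map_poly f \o theta) alpha)).
    by apply: (hE _ _ u%:P); rewrite /= theta_s map_polyC -polyCM hu.
  by rewrite -map_mxM mulmx1C // map_mx1.
have hEbeta : in_E (map_mx (map_poly (map_poly f)) beta).
  rewrite map_mxM; apply: in_E_mulmx.
    rewrite -map_mx_comp; apply: (hE _ _ u%:P%:P).
    by rewrite /= theta_s map_polyC /= comp_polyC !map_polyC /= -!polyCM map_polyC -polyCM hu.
  have := in_E_rmorph polyC hE'.
  by congr in_E; apply/matrixP=> i j; rewrite !mxE /= map_polyC.
have [K HK] := dilation_principle (poly_localization hloc) hn beta0 hEbeta.
exists K => b y; have := in_E_rmorph (horner_eval y) (HK b%:P).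
have poly_lift_comp (p q : {poly R}) : (map_poly polyC p).[q] = p \Po q by [].
have e1 : map_mx (horner_eval y) (map_mx (horner_eval (s%:P ^+ K * b%:P)) (map_mx shift alpha))
    = theta_at (y + s ^+ K * b) alpha.
  apply/matrixP=> i j; rewrite !mxE /= !horner_evalE horner_comp hornerD hornerX hornerC.
  by rewrite poly_lift_comp horner_comp hornerD hornerX hornerM hornerC -rmorphXn hornerC.
have e2 : map_mx (horner_eval y) (map_mx (horner_eval (s%:P ^+ K * b%:P))
    (map_mx polyC (map_mx theta alpha'))) = theta_at y alpha'.
  by apply/matrixP=> i j; rewrite !mxE /= !horner_evalE hornerC.
by rewrite !map_mxM e1 e2.
Qed.

(* Patching: with d \in t^K2 R and 1 - d \in s^K1 R, the two local factors
   multiply to alpha theta(alpha^-1)(d) theta(alpha)(d) = alpha. *)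
Lemma graded_patching_nontrivial (s t a b : R) (hs : Rg 0 s) (ht : Rg 0 t)
    (hab : s * a + t * b = 1) (S1 S2 : comNzRingType)
    (f1 : {rmorphism R -> S1}) (f2 : {rmorphism R -> S2}) :
  is_localization f1 s -> is_localization f2 t ->
  elementary_away s alpha -> elementary_away t alpha -> in_E alpha.
Proof.
move=> loc1 loc2 hEs hEt.
have [K1 factor_s] := graded_local_factor hs loc1 hEs.
have [K2 factor_t] := graded_local_factor ht loc2 hEt.
have [u [v huv]] := comaximal_powers K2 K1 hab.
have := in_E_mulmx (factor_s v (t ^+ K2 * u)) (factor_t u 0).
rewrite huv add0r theta_at0_inv mulmx1 -mulmxA theta_at_inv mulmx1.
by congr in_E; apply/matrixP=> i j; rewrite mxE Theta_at1.
Qed.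

(* The general case: a trivial localization forces the other element to be a unit. *)
Lemma graded_patching (s t a b : R) (hs : Rg 0 s) (ht : Rg 0 t)
    (hab : s * a + t * b = 1) (S1 S2 : comPzRingType)
    (f1 : {rmorphism R -> S1}) (f2 : {rmorphism R -> S2}) :
  is_localization f1 s -> is_localization f2 t ->
  elementary_away s alpha -> elementary_away t alpha -> in_E alpha.
Proof.
move=> loc1 loc2 hEs hEt.
have [S1_0|S1_nz] := eqVneq (1 : S1) 0.
  have [k sk] := trivial_localization_nilpotent loc1 S1_0.
  by have [w tw] := comaximal_nilpotent_unit hab sk; apply: elementary_away_unit hEt tw.
have [S2_0|S2_nz] := eqVneq (1 : S2) 0.
  have [k tk] := trivial_localization_nilpotent loc2 S2_0.
  have hba : t * b + s * a = 1 by rewrite addrC.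
  by have [w sw] := comaximal_nilpotent_unit hba tk; apply: elementary_away_unit hEs sw.
have [S1' [f1' loc1']] := nontrivial_localization S1_nz loc1.
have [S2' [f2' loc2']] := nontrivial_localization S2_nz loc2.
by apply: (graded_patching_nontrivial hs ht hab loc1' loc2').
Qed.

End GradedPatching.

Theorem mainTheorem2 (R : comNzRingType) (Rg : nat -> R -> Prop)
  (hnoeth : noetherian R) (hdim : finite_krull_dim R)
  (hgr : graded_ring Rg) (n : nat) (hn : (3 <= n)%N) (s t : R)
  (hs : Rg 0%N s) (ht : Rg 0%N t)
  (hst : exists a b : R, [/\ Rg 0%N a, Rg 0%N b & s * a + t * b = 1])
  (alpha : 'M[R]_n) (hGL : in_GL alpha)
  (h1 : forall i j, in_Rplus Rg ((alpha - 1%:M) i j))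
  (h2 : exists (S : comPzRingType) (f : {rmorphism R -> S}),
          is_localization f s /\ in_E (map_mx f alpha))
  (h3 : exists (S : comPzRingType) (f : {rmorphism R -> S}),
          is_localization f t /\ in_E (map_mx f alpha)) :
  in_E alpha.
Proof.
have [a [b [_ _ hab]]] := hst.
have [alpha' [alpha_inv _]] := hGL.
have [S1 [f1 [loc1 hE1]]] := h2; have [S2 [f2 [loc2 hE2]]] := h3.
apply: (graded_patching hn alpha_inv (Theta_eval0_Rplus hgr h1) hs ht hab loc1 loc2).
- exact: localization_elementary_away loc1 hE1.
- exact: localization_elementary_away loc2 hE2.
Qed.
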